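(* Let $d,d'\in\mathcal D$, with notation $(\mathbf P,\mathbf r,J_\mu,J_{\mu,\sigma},\mathbf g)$ for $d$ and $(\mathbf P',\mathbf r',J'_{\mu,\sigma})$ for $d'$, and write $p(i,j),r(i),g(j)$, $p'(i,j),r'(i)$ for the entries. If $$\sum_{j\in\mathcal S}p'(i,j)g(j)+r'(i)-\beta(r'(i)-J_\mu)^2\ \ge\ \sum_{j\in\mathcal S}p(i,j)g(j)+r(i)-\beta(r(i)-J_\mu)^2\qquad\text{for all } i\in\mathcal S,$$ then $J'_{\mu,\sigma}\ge J_{\mu,\sigma}$. If moreover the inequality is strict for at least one $i\in\mathcal S$, then $J'_{\mu,\sigma}>J_{\mu,\sigma}$.
   Context: Let $\mathcal S=\{1,\dots,S\}$ be a finite state space and $\mathcal A$ a finite action set. For $i,j\in\mathcal S$, $a\in\mathcal A$, let $p^a(i,j)\ge 0$ with $\sum_{j}p^a(i,j)=1$ be transition probabilities and $r(i,a)\in\mathbb R$ rewards. A deterministic stationary policy is a map $d:\mathcal S\to\mathcal A$; $\mathcal D$ denotes the set of such policies. Under $d$, $\mathbf P^d$ is the $S\times S$ matrix with entries $p^{d(i)}(i,j)$ and $\mathbf r^d$ is the column vector with entries $r(i,d(i))$. Standing assumption: for every $d\in\mathcal D$ the chain with transition matrix $\mathbf P^d$ is irreducible, so it has a unique stationary distribution (row vector) $\boldsymbol\pi^d$, $\boldsymbol\pi^d\mathbf P^d=\boldsymbol\pi^d$, $\boldsymbol\pi^d\mathbf 1=1$, with all entries strictly positive. Define $J^d_\mu=\boldsymbol\pi^d\mathbf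 r^d$, $J^d_\sigma=\sum_i\pi^d(i)(r(i,d(i))-J^d_\mu)^2$, and for fixed $\beta>0$, $J^d_{\mu,\sigma}=J^d_\mu-\beta J^d_\sigma=\boldsymbol\pi^d\mathbf f^d$ with $f^d(i)=r(i,d(i))-\beta(r(i,d(i))-J^d_\mu)^2$. The performance potential $\mathbf g^d$ is any solution of $\mathbf g^d=\mathbf f^d-J^d_{\mu,\sigma}\mathbf 1+\mathbf P^d\mathbf g^d$ (unique up to an additive constant vector). *)

From mathcomp Require Import all_boot all_order all_algebra.
Set Implicit Arguments. Unset Strict Implicit. Unset Printing Implicit Defensive.
Import Order.TTheory GRing.Theory Num.Theory.
Local Open Scope ring_scope.

Section MDP.
Variables (R : realFieldType) (n : nat) (A : finType).
(* transition probabilities p a i j = p^a(i,j), rewards r i a = r(i,a) *)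
Variable p : A -> 'I_n -> 'I_n -> R.
Variable r : 'I_n -> A -> R.

Definition Pmat (d : 'I_n -> A) : 'M[R]_n := \matrix_(i, j) p (d i) i j.

Definition Ppow (P : 'M[R]_n) (k : nat) : 'M[R]_n := iter k (fun M => M *m P) 1%:M.

Definition irreducible (P : 'M[R]_n) : Prop :=
  forall i j : 'I_n, exists k : nat, 0 < Ppow P k i j.

Definition stationary_dist (P : 'M[R]_n) (pi : 'rV[R]_n) : Prop :=
  [/\ pi *m P = pi, \sum_i pi 0 i = 1 & forall i, 0 <= pi 0 i].

Definition Jmu (pi : 'rV[R]_n) (d : 'I_n -> A) : R := \sum_i pi 0 i * r i (d i).

Definition fvec (beta : R) (pi : 'rV[R]_n) (d : 'I_n -> A) (i : 'I_n) : R :=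
  r i (d i) - beta * (r i (d i) - Jmu pi d) ^+ 2.

Definition Jmusig (beta : R) (pi : 'rV[R]_n) (d : 'I_n -> A) : R :=
  \sum_i pi 0 i * fvec beta pi d i.

Definition potential (beta : R) (pi : 'rV[R]_n) (d : 'I_n -> A) (g : 'I_n -> R) : Prop :=
  forall i, g i = fvec beta pi d i - Jmusig beta pi d + \sum_j Pmat d i j * g j.
End MDP.

From mathcomp Require Import all_boot all_order all_algebra.
From mathcomp Require Import ring lra.
Import Order.TTheory GRing.Theory Num.Theory.
Local Open Scope ring_scope.

(* Write Q_e(i) = sum_j p^e(i,j) g(j) + r(i,e(i)) - beta (r(i,e(i)) - J_mu)^2
   for the one-step value of action e(i) measured against the potential g
   and the mean J_mu of the old policy d.  The proof has three ingredients:
   - the Poisson equation gives Q_d(i) = g(i) + J_{mu,sigma}, and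
     stationarity of pi' turns pi' P' g into pi' g, which yields the
     performance-difference formula
       pi' (Q_d' - Q_d) = pi' (r' - beta (r' - J_mu)^2) - J_{mu,sigma};
   - the variance about a point c is the variance about the mean plus the
     squared distance to c, so the right-hand side above is at most
     J'_{mu,sigma} - J_{mu,sigma};
   - an irreducible chain has a strictly positive stationary distribution,
     so pi' (Q_d' - Q_d) is nonnegative, and positive if some term is. *)

Section WeightedSums.
Context {R : realFieldType} {n : nat}.
Implicit Types (w x : 'I_n -> R) (c beta : R).

Lemma var_shift w x c :
  \sum_i w i = 1 ->
  \sum_i w i * (x i - c) ^+ 2 =
  \sum_i w i * (x i - \sum_j w j * x j) ^+ 2 + (\sum_j w j * x j - c) ^+ 2.
Proof.
move=> hw; set m := \sum_j w j * x j.
have expand i : w i * (x i - c) ^+ 2 = w i * (x i - m) ^+ 2 +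
    ((m - c) * 2 * (w i * x i) + (- ((m - c) * 2 * m) + (m - c) ^+ 2) * w i).
  by ring.
rewrite (eq_bigr _ (fun i _ => expand i)) !big_split /= -!mulr_sumr hw -/m.
by ring.
Qed.

Lemma mean_var_shift_le w x c beta :
  \sum_i w i = 1 -> 0 <= beta ->
  \sum_i w i * (x i - beta * (x i - c) ^+ 2) <=
  \sum_i w i * (x i - beta * (x i - \sum_j w j * x j) ^+ 2).
Proof.
move=> hw hbeta.
have split_sum a : \sum_i w i * (x i - beta * (x i - a) ^+ 2) =
    \sum_i w i * x i - beta * \sum_i w i * (x i - a) ^+ 2.
  by rewrite mulr_sumr -sumrB; apply: eq_bigr => i _; ring.
rewrite !split_sum (var_shift w x c hw) mulrDr.
have : 0 <= beta * (\sum_j w j * x j - c) ^+ 2 by rewrite mulr_ge0 ?sqr_ge0.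
lra.
Qed.

Lemma wsum_gt0 {w x} {i0 : 'I_n} :
  (forall i, 0 < w i) -> (forall i, 0 <= x i) -> 0 < x i0 ->
  0 < \sum_i w i * x i.
Proof.
move=> hw hx hi0; rewrite (bigD1 i0) //=; apply: ltr_pwDl; first exact: mulr_gt0.
by apply: sumr_ge0 => i _; apply: mulr_ge0; [exact: ltW | exact: hx].
Qed.

End WeightedSums.

Section Stationary.
Context {R : realFieldType} {n : nat} {P : 'M[R]_n}.
Hypothesis P_ge0 : forall i j, 0 <= P i j.

Lemma Ppow_ge0 k i j : 0 <= Ppow P k i j.
Proof.
elim: k i j => [|k IH] i j; first by rewrite /Ppow /= mxE ler0n.
by rewrite /Ppow /= -/(Ppow P k) mxE sumr_ge0 // => l _; rewrite mulr_ge0.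
Qed.

Lemma stationary_Ppow (pi : 'rV[R]_n) k : pi *m P = pi -> pi *m Ppow P k = pi.
Proof.
move=> hpi; elim: k => [|k IH]; first by rewrite /Ppow /= mulmx1.
by rewrite /Ppow /= -/(Ppow P k) mulmxA IH hpi.
Qed.

(* Every state carries positive stationary mass in an irreducible chain:
   some state j has pi(j) > 0, and pi(i) >= pi(j) P^k(j,i) > 0 for the k
   given by irreducibility. *)
Lemma stationary_pos (pi : 'rV[R]_n) :
  irreducible P -> stationary_dist P pi -> forall i, 0 < pi 0 i.
Proof.
move=> hirr [hstat hsum hge0] i.
have [j pij_gt0] : exists j, 0 < pi 0 j.
  case: (pickP (fun j => 0 < pi 0 j)) => [j hj|hnone]; first by exists j.
  have : \sum_i pi 0 i = 0.
    by apply: big1 => l _; apply/eqP; rewrite eq_le hge0 andbT leNgt hnone.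
  by rewrite hsum => /eqP; rewrite oner_eq0.
have [k hk] := hirr j i.
have := congr1 (fun M : 'rV[R]_n => M 0 i) (stationary_Ppow pi k hstat).
rewrite /= mxE => <-.
have hx l : 0 <= pi 0 l * Ppow P k l i by rewrite mulr_ge0 ?Ppow_ge0.
rewrite (bigD1 j) //=; apply: ltr_pwDl; first exact: mulr_gt0.
by apply: sumr_ge0 => l _; apply: hx.
Qed.

Lemma stationary_average (pi : 'rV[R]_n) (g : 'I_n -> R) :
  pi *m P = pi ->
  \sum_i pi 0 i * \sum_j P i j * g j = \sum_j pi 0 j * g j.
Proof.
move=> hstat; under eq_bigr do rewrite mulr_sumr.
rewrite exchange_big /=; apply: eq_bigr => j _.
have := congr1 (fun M : 'rV[R]_n => M 0 j) hstat; rewrite /= mxE => <-.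
by rewrite mulr_suml; apply: eq_bigr => i _; rewrite mulrA.
Qed.

End Stationary.

Section PolicyDifference.
Context {R : realFieldType} {n : nat} {A : finType}.
Variables (p : A -> 'I_n -> 'I_n -> R) (r : 'I_n -> A -> R) (beta : R).
Variables (d : 'I_n -> A) (pi : 'rV[R]_n) (g : 'I_n -> R).

Definition Qval (e : 'I_n -> A) (i : 'I_n) : R :=
  \sum_j p (e i) i j * g j + r i (e i) - beta * (r i (e i) - Jmu r pi d) ^+ 2.

Lemma Qval_potential :
  potential p r beta pi d g -> forall i, Qval d i = g i + Jmusig r beta pi d.
Proof.
move=> hg i; rewrite /Qval (hg i) /fvec.
under [X in _ = _ - _ + X + _]eq_bigr do rewrite mxE.
by ring.
Qed.

Lemma performance_difference (d' : 'I_n -> A) (pi' : 'rV[R]_n) :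
  stationary_dist (Pmat p d') pi' -> potential p r beta pi d g ->
  \sum_i pi' 0 i * (Qval d' i - Qval d i) =
  \sum_i pi' 0 i * (r i (d' i) - beta * (r i (d' i) - Jmu r pi d) ^+ 2)
  - Jmusig r beta pi d.
Proof.
move=> [hstat hsum _] hg; set J := Jmusig r beta pi d.
have hPg : \sum_i pi' 0 i * \sum_j p (d' i) i j * g j = \sum_j pi' 0 j * g j.
  rewrite -(stationary_average pi' g hstat); apply: eq_bigr => i _.
  by congr (_ * _); apply: eq_bigr => j _; rewrite mxE.
have expand i : pi' 0 i * (Qval d' i - Qval d i) =
    pi' 0 i * \sum_j p (d' i) i j * g j +
    (pi' 0 i * (r i (d' i) - beta * (r i (d' i) - Jmu r pi d) ^+ 2) +
    (- (pi' 0 i * g i) + - J * pi' 0 i)).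
  by rewrite Qval_potential // /Qval -/J; ring.
rewrite (eq_bigr _ (fun i _ => expand i)) !big_split /= hPg.
by rewrite -mulr_sumr hsum sumrN; ring.
Qed.

End PolicyDifference.

Arguments performance_difference {R n A p r beta d pi g d' pi'}.

Theorem theorem1 (R : realFieldType) (n : nat) (A : finType)
  (p : A -> 'I_n -> 'I_n -> R) (r : 'I_n -> A -> R) (beta : R)
  (hp0 : forall a i j, 0 <= p a i j)
  (hp1 : forall a i, \sum_j p a i j = 1)
  (hirr : forall d : 'I_n -> A, irreducible (Pmat p d))
  (hbeta : 0 < beta)
  (d d' : 'I_n -> A) (pi pi' : 'rV[R]_n) (g : 'I_n -> R)
  (hpi : stationary_dist (Pmat p d) pi)
  (hpi' : stationary_dist (Pmat p d') pi')
  (hg : potential p r beta pi d g)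
  (hcond : forall i : 'I_n,
     \sum_j p (d' i) i j * g j + r i (d' i) - beta * (r i (d' i) - Jmu r pi d) ^+ 2
     >= \sum_j p (d i) i j * g j + r i (d i) - beta * (r i (d i) - Jmu r pi d) ^+ 2) :
  Jmusig r beta pi' d' >= Jmusig r beta pi d /\
  ((exists i : 'I_n,
     \sum_j p (d' i) i j * g j + r i (d' i) - beta * (r i (d' i) - Jmu r pi d) ^+ 2
     > \sum_j p (d i) i j * g j + r i (d i) - beta * (r i (d i) - Jmu r pi d) ^+ 2) ->
   Jmusig r beta pi' d' > Jmusig r beta pi d).
Proof.
have hdiff := performance_difference hpi' hg.
have [_ hsum' hge0'] := hpi'.
have hcenter : \sum_i pi' 0 i * (r i (d' i) - beta * (r i (d' i) - Jmu r pi d) ^+ 2)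
    <= Jmusig r beta pi' d'.
  exact: (mean_var_shift_le (fun i => pi' 0 i) (fun i => r i (d' i)) _ _ hsum' (ltW hbeta)).
set Q := Qval p r beta d pi g.
have hgain_ge0 i : 0 <= Q d' i - Q d i.
  by rewrite subr_ge0; apply: hcond.
split.
  have : 0 <= \sum_i pi' 0 i * (Q d' i - Q d i).
    by apply: sumr_ge0 => i _; apply: mulr_ge0; [exact: hge0' | exact: hgain_ge0].
  by rewrite hdiff; lra.
move=> [i0 hi0].
have P'_ge0 i j : 0 <= Pmat p d' i j by rewrite mxE.
have pi'_pos := stationary_pos P'_ge0 pi' (hirr d') hpi'.
have : 0 < \sum_i pi' 0 i * (Q d' i - Q d i).
  by apply: (wsum_gt0 pi'_pos hgain_ge0); rewrite subr_gt0; exact: hi0.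
by rewrite hdiff; lra.
Qed.
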